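(* Let $\mathcal{C}_1$ be an $(n,k,d)$ binary linear code. Then the code $\mathcal{C}_2 = \{(u,u) : u \in \mathcal{C}_1\}$ is a $(2n,k,2d)$ code with $$\rho(\mathcal{C}_2) \le \rho(\mathcal{C}_1) + n.$$
   Context: An $(n,k,d)$ code is a linear code of length $n$, dimension $k$ and minimum Hamming distance $d$. A parity-check matrix for a linear code $\mathcal{C}$ is any matrix (possibly with linearly dependent rows) whose rows span $\mathcal{C}^\perp$. For a parity-check matrix $H$, the stopping distance $s(H)$ is the largest integer such that for every set of $s(H)-1$ or fewer columns of $H$, the projection of $H$ onto those columns contains at least one row of Hamming weight exactly one. The stopping redundancy $\rho(\mathcal{C})$ is the smallest number of rows of a parity-check matrix $H$ for $\mathcal{C}$ with $s(H) = d(\mathcal{C})$, the minimum distance of $\mathcal{C}$. *)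

From HB Require Import structures.
From mathcomp Require Import all_boot all_order all_algebra.
Set Implicit Arguments. Unset Strict Implicit. Unset Printing Implicit Defensive.
Import GRing.Theory.
Local Open Scope ring_scope.

Notation F2 := ('F_2)%type.

(* A binary linear code of length n is represented by a matrix whose row
   space is the code; membership of a word v is (v <= C)%MS. *)

Definition wt n (v : 'rV[F2]_n) : nat := #|[set j : 'I_n | v 0 j != 0]|.

Definition min_dist m n (C : 'M[F2]_(m, n)) (d : nat) : Prop :=
  (exists v : 'rV[F2]_n, (v <= C)%MS /\ v != 0 /\ wt v = d) /\
  (forall v : 'rV[F2]_n, (v <= C)%MS -> v != 0 -> (d <= wt v)%N).

Definition is_code m n k d (C : 'M[F2]_(m, n)) : Prop :=
  \rank C = k /\ min_dist C d.

Definition dual_code m n (C : 'M[F2]_(m, n)) : 'M[F2]_n := kermx C^T.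

(* H is a parity-check matrix for C: its rows (possibly dependent) span C^perp *)
Definition parity_check r m n (H : 'M[F2]_(r, n)) (C : 'M[F2]_(m, n)) : Prop :=
  (H == dual_code C)%MS.

Definition stop_ok r n (H : 'M[F2]_(r, n)) (s : nat) : Prop :=
  forall S : {set 'I_n}, S != set0 -> (#|S| < s)%N ->
    exists i : 'I_r, #|[set j in S | H i j != 0]| = 1%N.

Definition stop_dist r n (H : 'M[F2]_(r, n)) (s : nat) : Prop :=
  stop_ok H s /\ ~ stop_ok H s.+1.

Definition stopping_redundancy m n (C : 'M[F2]_(m, n)) (d : nat) (rho : nat) : Prop :=
  (exists H : 'M[F2]_(rho, n), parity_check H C /\ stop_dist H d) /\
  (forall r : nat, (r < rho)%N ->
     ~ exists H : 'M[F2]_(r, n), parity_check H C /\ stop_dist H d).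

From HB Require Import structures.
From mathcomp Require Import all_boot all_order all_algebra.
From Stdlib Require Import Classical Wf_nat.
Set Implicit Arguments. Unset Strict Implicit. Unset Printing Implicit Defensive.
Import GRing.Theory.
Local Open Scope ring_scope.

(* The dual of the code {(u, u)} consists of the words (a, b) with a + b in
   the dual of C1, so [H1 0; I I] is a parity-check matrix for it.
   Split a nonempty column set S with |S| < 2d into its halves A and B.  If
   A <> B, a row (e_j, e_j) with j in exactly one half meets S once; if A = B,
   then 0 < |A| < d and the row of H1 isolating a column of A does it.
   Conversely no parity-check matrix has stopping distance above the minimum
   distance: a row meeting the support of a codeword in exactly one position
   would not be orthogonal to it. *)

Definition supp n (v : 'rV[F2]_n) : {set 'I_n} := [set j | v 0 j != 0].

Lemma F2_nat (x : F2) : x = (x != 0)%:R.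
Proof. by case: x => [[|[|m]]] // lt_m2; apply/val_inj. Qed.

Lemma F2_nat_eq0 (b : bool) : ((b%:R : F2) == 0) = ~~ b.
Proof. by case: b; rewrite ?oner_eq0 ?eqxx. Qed.

Lemma oppmx_F2 m n (A : 'M[F2]_(m, n)) : - A = A.
Proof. by apply/matrixP => i j; rewrite mxE oppr_pchar2 // pchar_Fp. Qed.

Lemma supp_eq0 n (v : 'rV[F2]_n) : (supp v == set0) = (v == 0).
Proof.
apply/eqP/eqP => [supp0 | ->]; last by apply/setP => j; rewrite !inE mxE eqxx.
by apply/rowP => j; move/setP/(_ j): supp0; rewrite !inE mxE => /negbFE/eqP.
Qed.

Lemma mulmx_trF2 r n (A : 'M[F2]_(r, n)) (v : 'rV[F2]_n) i :
  (A *m v^T) i 0 = #|[set j in supp v | A i j != 0]|%:R.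
Proof.
rewrite mxE -sum1_card natr_sum [RHS]big_mkcond /=.
apply: eq_bigr => j _; rewrite mxE [A i j]F2_nat [v 0 j]F2_nat -natrM mulnb.
by rewrite !inE andbC; case: (_ && _).
Qed.

Lemma card_split_set n1 n2 (S : {set 'I_(n1 + n2)}) :
  #|S| = (#|[set j | lshift n2 j \in S]| + #|[set j | rshift n1 j \in S]|)%N.
Proof.
rewrite -!sum1_card big_split_ord /=.
by congr (_ + _)%N; apply: eq_bigl => j; rewrite inE.
Qed.

Lemma wt_row_mx n1 n2 (u : 'rV[F2]_n1) (v : 'rV[F2]_n2) :
  wt (row_mx u v) = (wt u + wt v)%N.
Proof.
rewrite /wt card_split_set; congr (_ + _)%N; apply: eq_card => j;
by rewrite !inE ?row_mxEl ?row_mxEr.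
Qed.

Lemma card_setI_pred1 n (A : {set 'I_n}) j :
  #|[set k in A | j == k]| = (j \in A).
Proof.
case: (boolP (j \in A)) => jA.
  rewrite (_ : [set k in A | j == k] = [set j]) ?cards1 //.
  by apply/setP => k; rewrite !inE eq_sym andbC; case: eqP => // ->.
rewrite (_ : [set k in A | j == k] = set0) ?cards0 //.
by apply/setP => k; rewrite !inE eq_sym andbC; case: eqP => // ->; rewrite (negbTE jA).
Qed.

Lemma sub_dual_code r m n (C : 'M[F2]_(m, n)) (A : 'M[F2]_(r, n)) :
  (A <= dual_code C)%MS <-> forall w : 'rV_n, (w <= C)%MS -> A *m w^T = 0.
Proof.
rewrite /dual_code sub_kermx; split => [/eqP AC0 w /submxP [x ->] | AC0].
  by rewrite trmx_mul mulmxA AC0 mul0mx.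
apply/eqP/matrixP => i j; move/matrixP/(_ i 0): (AC0 _ (row_sub j C)).
by rewrite !mxE => wC0; rewrite -[RHS]wC0; apply: eq_bigr => k _; rewrite !mxE.
Qed.

Lemma not_stop_ok_wt r m n (H : 'M[F2]_(r, n)) (C : 'M[F2]_(m, n)) v :
  (H <= dual_code C)%MS -> (v <= C)%MS -> v != 0 -> ~ stop_ok H (wt v).+1.
Proof.
move=> /sub_dual_code HC vC v_neq0 /(_ (supp v)) stopH.
have [|//|i Hi] := stopH; first by rewrite supp_eq0.
by move/matrixP/(_ i 0): (HC v vC); rewrite mulmx_trF2 Hi mxE; apply/eqP/oner_neq0.
Qed.

Lemma stop_dist_min_dist r m n (H : 'M[F2]_(r, n)) (C : 'M[F2]_(m, n)) d :
  parity_check H C -> min_dist C d -> stop_ok H d -> stop_dist H d.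
Proof.
move=> /andP [HC _] [[v [vC [v_neq0 <-]]] _] stopH; split => //.
exact: not_stop_ok_wt HC vC v_neq0.
Qed.

Lemma stopping_redundancy_le m n (C : 'M[F2]_(m, n)) d r :
  (exists H : 'M[F2]_(r, n), parity_check H C /\ stop_dist H d) ->
  exists rho, stopping_redundancy C d rho /\ (rho <= r)%N.
Proof.
set P := fun s => exists H : 'M[F2]_(s, n), parity_check H C /\ stop_dist H d.
move=> Pr; have [rho [[Prho rho_least] _]] :=
  dec_inh_nat_subset_has_unique_least_element P (fun s => classic (P s)) (ex_intro _ r Pr).
exists rho; split; last exact/leP/rho_least.
split=> // r' lt_r'_rho Pr'; move/leP: (rho_least r' Pr').
by rewrite leqNgt lt_r'_rho.
Qed.

Definition dup_check_mx r n (H : 'M[F2]_(r, n)) : 'M[F2]_(r + n, n + n) :=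
  col_mx (row_mx H 0) (row_mx 1%:M 1%:M).

Section DupCheckSupport.
Variables (r n : nat) (H : 'M[F2]_(r, n)) (S : {set 'I_(n + n)}).
Let A := [set j | lshift n j \in S].
Let B := [set j | rshift n j \in S].

Lemma card_dup_check_top i :
  #|[set c in S | dup_check_mx H (lshift n i) c != 0]| = #|[set j in A | H i j != 0]|.
Proof.
rewrite card_split_set (_ : [set j | rshift n j \in _] = set0) ?cards0 ?addn0.
  by apply: eq_card => j; rewrite !inE col_mxEu row_mxEl.
by apply/setP => j; rewrite !inE col_mxEu row_mxEr mxE eqxx andbF.
Qed.

Lemma card_dup_check_bottom j :
  #|[set c in S | dup_check_mx H (rshift r j) c != 0]| = ((j \in A) + (j \in B))%N.
Proof.
rewrite card_split_set -!card_setI_pred1; congr (_ + _)%N; apply: eq_card => k;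
by rewrite !inE col_mxEd ?row_mxEl ?row_mxEr mxE F2_nat_eq0 negbK.
Qed.

End DupCheckSupport.

Lemma stop_ok_dup r n (H : 'M[F2]_(r, n)) d :
  stop_ok H d -> stop_ok (dup_check_mx H) (2 * d).
Proof.
move=> stopH S S_neq0 ltSd.
set A := [set j | lshift n j \in S]; set B := [set j | rshift n j \in S].
have cardS : #|S| = (#|A| + #|B|)%N := card_split_set S.
have [AB | /eqP neqAB] := eqVneq A B.
  rewrite cardS -AB addnn -mul2n ltn_mul2l /= in ltSd.
  have A_neq0 : A != set0.
    by rewrite -card_gt0 -double_gt0 -addnn {2}AB -cardS card_gt0.
  have [i Hi] := stopH A A_neq0 ltSd.
  by exists (lshift n i); rewrite card_dup_check_top.
have [j Aj_neq_Bj] : exists j, (j \in A) != (j \in B).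
  apply/existsP; apply: contra_notT neqAB => /existsPn eqAB.
  by apply/setP => j; apply/eqP/negPn.
exists (rshift r j); rewrite card_dup_check_bottom.
by move: Aj_neq_Bj; case: (j \in A); case: (j \in B).
Qed.

Section DuplicatedCode.
Variables (n m1 m2 : nat) (C1 : 'M[F2]_(m1, n)) (C2 : 'M[F2]_(m2, n + n)).
Hypothesis C2_dup : forall w : 'rV[F2]_(n + n),
  (w <= C2)%MS <-> exists u : 'rV[F2]_n, (u <= C1)%MS /\ w = row_mx u u.

Lemma dup_code_eqmx : (C2 == C1 *m row_mx 1%:M 1%:M)%MS.
Proof.
apply/andP; split; apply/row_subP => i.
  have [u [uC1 ->]] := proj1 (C2_dup _) (row_sub i C2).
  by rewrite (_ : row_mx u u = u *m row_mx 1%:M 1%:M) ?submxMr // mul_mx_row mulmx1.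
by rewrite row_mul mul_mx_row mulmx1; apply/C2_dup; exists (row i C1); rewrite row_sub.
Qed.

Lemma mxrank_dup_code : \rank C2 = \rank C1.
Proof.
rewrite (eqmx_rank dup_code_eqmx) mxrankMfree //; apply/row_freeP.
by exists (col_mx 1%:M 0); rewrite mul_row_col mulmx1 mulmx0 addr0.
Qed.

Lemma min_dist_dup_code d : min_dist C1 d -> min_dist C2 (2 * d).
Proof.
move=> [[u [uC1 [u_neq0 wt_u]]] minC1]; split.
  exists (row_mx u u); split; first by apply/C2_dup; exists u.
  by rewrite row_mx_eq0 negb_and u_neq0 wt_row_mx wt_u mul2n -addnn.
move=> _ /C2_dup [v [vC1 ->]].
rewrite row_mx_eq0 andbb wt_row_mx (addnn (wt v)) -mul2n leq_mul2l.
exact: minC1.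
Qed.

Lemma sub_dual_dup_code r (A B : 'M[F2]_(r, n)) :
  (row_mx A B <= dual_code C2)%MS <-> ((A + B)%R <= dual_code C1)%MS.
Proof.
rewrite !sub_dual_code; split=> [AB_C2 u uC1 | AB_C1 _ /C2_dup [u [uC1 ->]]].
  by rewrite mulmxDl -mul_row_col -tr_row_mx AB_C2 //; apply/C2_dup; exists u.
by rewrite tr_row_mx mul_row_col -mulmxDl AB_C1.
Qed.

Lemma parity_check_dup r (H : 'M[F2]_(r, n)) :
  parity_check H C1 -> parity_check (dup_check_mx H) C2.
Proof.
move=> /andP [H_C1 C1_H]; apply/andP; split.
  rewrite col_mx_sub; apply/andP; split; apply/sub_dual_dup_code; first by rewrite addr0.
  by rewrite -{2}[1%:M]oppmx_F2 subrr sub0mx.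
rewrite -[dual_code C2]hsubmxK; set a := lsubmx _; set b := rsubmx _.
have /submxP [x ab_xH] : ((a + b)%R <= H)%MS.
  by apply: submx_trans C1_H; apply/sub_dual_dup_code; rewrite hsubmxK.
suff -> : row_mx a b = row_mx x b *m dup_check_mx H by apply: submxMl.
rewrite mul_row_col !mul_mx_row mulmx0 mulmx1 add_row_mx -ab_xH add0r.
by rewrite -[X in a + b + X]oppmx_F2 addrK.
Qed.

End DuplicatedCode.

Theorem theorem8 (n k d m1 m2 : nat) (C1 : 'M[F2]_(m1, n)) (C2 : 'M[F2]_(m2, n + n)) :
  is_code k d C1 ->
  (forall w : 'rV[F2]_(n + n),
      (w <= C2)%MS <-> exists u : 'rV[F2]_n, (u <= C1)%MS /\ w = row_mx u u) ->
  is_code k (2 * d) C2 /\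
  (forall rho1 : nat, stopping_redundancy C1 d rho1 ->
     exists rho2 : nat, stopping_redundancy C2 (2 * d) rho2 /\ (rho2 <= rho1 + n)%N).
Proof.
move=> [rank_C1 dist_C1] C2_dup.
have dist_C2 := min_dist_dup_code C2_dup dist_C1.
split; first by split; rewrite ?(mxrank_dup_code C2_dup).
move=> rho1 [[H1 [H1_C1 [stop_H1 _]]] _].
have H2_C2 := parity_check_dup C2_dup H1_C1.
apply: stopping_redundancy_le; exists (dup_check_mx H1); split => //.
exact: stop_dist_min_dist H2_C2 dist_C2 (stop_ok_dup stop_H1).
Qed.
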